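(* Let $X=\{1,\dots,n\}$, let $a=(1,2,\dots,n)$ be the $n$-cycle, let $S$ be the flip $S(x,y)=(y,x)$ and $\beta(x,y)=(a^{-1}(y),a(x))$. Then $f,g\colon X\times X\to H$ ($H$ a group) is a noncommutative 2-cocycle pair for $(X,S,\beta)$ if and only if $g\equiv 1$ and, for all $x,y,z\in X$, $f(x,y)=f(a(x),a(y))$, $f(x,x)=1$ and $f(x,y)f(x\triangleright y,z)=f(x,z)f(x\triangleright z,y\triangleright z)$, where $x\triangleright y=x$ is the trivial quandle operation (so that $S(x,y)=(y,x\triangleright y)$). In particular, for $n=2$, $f$ is fully determined by $f(1,2)$.
   Context: For a bijection $\sigma\colon X\times X\to X\times X$ write $\sigma(x,y)=(\sigma^1(x,y),\sigma^2(x,y))$; for a biquandle $(X,\sigma)$, $s_\sigma\colon X\to X$ is the bijection with $\{(x,y):\sigma(x,y)=(x,y)\}=\{(x,s_\sigma(x))\}$; write $s=s_S$, $s_\beta$. Here $(X,S,\beta)$ is a virtual pair. A noncommutative 2-cocycle pair for a virtual pair $(X,S,\beta)$ with values in a group $H$ is a pair $f,g\colon X\times X\to H$ such that for all $x,y,z\in X$: (f1) $f(x,y)f(S^2(x,y),z)=f(x,S^1(y,z))f(S^2(x,S^1(y,z)),S^2(y,z))$; (f2) $f(S^1(x,y),S^1(S^2(x,y),z))=f(y,z)$; (f3) $f(x,s(x))=1$; (g1) $g(x,s_\beta(x))=1$; (g2) $g(x,y)g(\beta(x,y))=1$; (g3) $g(x,y)g(\beta^2(x,y),z)=g(x,\beta^1(y,z))g(\beta^2(x,\beta^1(y,z)),\beta^2(y,z))$;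 (g4) $g(y,z)g(\beta^2(x,\beta^1(y,z)),\beta^2(y,z))=g(x,y)g(\beta^1(x,y),\beta^1(\beta^2(x,y),z))$; (g5) $g(y,z)g(x,\beta^1(y,z))=g(\beta^2(x,y),z)g(\beta^1(x,y),\beta^1(\beta^2(x,y),z))$; (m1) $g(y,z)=g(S^1(x,y),\beta^1(S^2(x,y),z))$; (m2) $g(y,z)g(x,\beta^1(y,z))=g(S^2(x,y),z)g(S^1(x,y),\beta^1(S^2(x,y),z))$; (m3) $g(x,\beta^1(y,z))f(\beta^2(x,\beta^1(y,z)),\beta^2(y,z))=f(x,y)g(S^2(x,y),z)$. *)

From HB Require Import structures.
From mathcomp Require Import all_boot fingroup.
Set Implicit Arguments. Unset Strict Implicit. Unset Printing Implicit Defensive.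
Local Open Scope group_scope.

Section Cocycle.
Variables (X : Type) (H : groupType).
Variables (S beta : X * X -> X * X).

Let S1 x y := (S (x, y)).1.
Let S2 x y := (S (x, y)).2.
Let b1 x y := (beta (x, y)).1.
Let b2 x y := (beta (x, y)).2.

(* s_sigma is the bijection whose graph is the fixed-point set of sigma;
   f(x, s(x)) = 1 for all x is thus written as: f = 1 on fixed points of S. *)
Definition nc_cocycle_pair (f g : X -> X -> H) : Prop :=
  (forall x y z,
        f x y * f (S2 x y) z = f x (S1 y z) * f (S2 x (S1 y z)) (S2 y z))
  /\ (forall x y z, f (S1 x y) (S1 (S2 x y) z) = f y z)
  /\ (forall x y, S (x, y) = (x, y) -> f x y = 1)
  /\ (forall x y, beta (x, y) = (x, y) -> g x y = 1)
  /\ (forall x y, g x y * g (b1 x y) (b2 x y) = 1)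
  /\ (forall x y z,
        g x y * g (b2 x y) z = g x (b1 y z) * g (b2 x (b1 y z)) (b2 y z))
  /\ (forall x y z,
        g y z * g (b2 x (b1 y z)) (b2 y z) = g x y * g (b1 x y) (b1 (b2 x y) z))
  /\ (forall x y z,
        g y z * g x (b1 y z) = g (b2 x y) z * g (b1 x y) (b1 (b2 x y) z))
  /\ (forall x y z, g y z = g (S1 x y) (b1 (S2 x y) z))
  /\ (forall x y z,
        g y z * g x (b1 y z) = g (S2 x y) z * g (S1 x y) (b1 (S2 x y) z))
  /\ (forall x y z,
        g x (b1 y z) * f (b2 x (b1 y z)) (b2 y z) = f x y * g (S2 x y) z).
End Cocycle.

(* X = {0,...,n-1} (0-indexed version of {1..n}); a = the n-cycle i |-> i+1 mod n *)
Definition cyc (n : nat) (i : 'I_n) : 'I_n := ordS i.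
Definition cyc_inv (n : nat) (i : 'I_n) : 'I_n := ord_pred i.

Definition flip (n : nat) (p : 'I_n * 'I_n) : 'I_n * 'I_n := (p.2, p.1).
Definition beta_cyc (n : nat) (p : 'I_n * 'I_n) : 'I_n * 'I_n :=
  (cyc_inv p.2, cyc p.1).

Definition triv_qdl (n : nat) (x y : 'I_n) : 'I_n := x.

(* With S the flip, (f2) is vacuous and (f1), (f3) say that the values
   f x _ commute and that f vanishes on the diagonal, while (m1) says that
   g x is invariant under the cycle a.  Since a acts transitively and (g1)
   gives g x (a x) = 1, g is trivial, after which (m3) reduces to the
   a-invariance of f and all the other axioms hold trivially.  An
   a-invariant f is determined by a single row, which for n = 2 consists
   of f(1,1) = 1 and f(1,2). *)

From Stdlib Require Import FunctionalExtensionality.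
From HB Require Import structures.
From mathcomp Require Import all_boot fingroup.
Local Open Scope group_scope.

Lemma cycK {n} : cancel (@cyc n) (@cyc_inv n). Proof. exact: ordSK. Qed.

Lemma cyc_invK {n} : cancel (@cyc_inv n) (@cyc n). Proof. exact: ord_predK. Qed.

Lemma val_iter_cyc n (x : 'I_n) k : val (iter k (@cyc n) x) = (x + k) %% n.
Proof.
elim: k => [|k IHk] /=; first by rewrite addn0 modn_small.
by rewrite IHk -addn1 modnDml addn1 addnS.
Qed.

Lemma cyc_ind n (P : 'I_n -> Prop) (x0 : 'I_n) :
  P x0 -> (forall x, P x -> P (cyc x)) -> forall x, P x.
Proof.
move=> Px0 PS x.
have -> : x = iter (x + n - x0) (@cyc n) x0.
  apply: val_inj; rewrite val_iter_cyc subnKC ?modnDr ?modn_small //.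
  exact: leq_trans (ltnW (ltn_ord x0)) (leq_addl x n).
by elim: (x + n - x0) => //= k; apply: PS.
Qed.

Lemma cyc_invariant_eq_row n T (f f' : 'I_n -> 'I_n -> T) (x0 : 'I_n) :
  (forall x y, f x y = f (cyc x) (cyc y)) ->
  (forall x y, f' x y = f' (cyc x) (cyc y)) ->
  (forall y, f x0 y = f' x0 y) -> f = f'.
Proof.
move=> fcyc f'cyc eq_row.
have eq_rows : forall x y, f x y = f' x y.
  apply: (@cyc_ind n (fun x => forall y, f x y = f' x y) x0 eq_row) => x eq_x y.
  by rewrite -(cyc_invK y) -fcyc -f'cyc eq_x.
by apply: functional_extensionality => x; apply: functional_extensionality.
Qed.

Section FlipCycleCocycle.
Variables (n : nat) (H : groupType) (f g : 'I_n -> 'I_n -> H).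

Lemma flip_cocycle_g1 :
  nc_cocycle_pair (@flip n) (@beta_cyc n) f g -> forall x y, g x y = 1.
Proof.
move=> [_ [_ [_ [g1 [_ [_ [_ [_ [m1 _]]]]]]]]] x.
apply: (@cyc_ind n _ (cyc x)) => [|z gxz].
- by apply: g1; rewrite /beta_cyc /= cycK.
- by rewrite (m1 x x) /= cycK.
Qed.

Lemma nc_cocycle_pair_flip_beta_cycP :
  nc_cocycle_pair (@flip n) (@beta_cyc n) f g <->
    ((forall x y, g x y = 1) /\
     (forall x y, f x y = f (cyc x) (cyc y)) /\
     (forall x, f x x = 1) /\
     (forall x y z,
        f x y * f (triv_qdl x y) z =
        f x z * f (triv_qdl x z) (triv_qdl y z))).
Proof.
split=> [cocycle | [g_1 [fcyc [fdiag fcomm]]]].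
  have g_1 := flip_cocycle_g1 cocycle.
  move: cocycle => [f1 [_ [f3 [_ [_ [_ [_ [_ [_ [_ m3]]]]]]]]]].
  split=> //; split; last by split=> [x|]; [apply: f3 | apply: f1].
  by move=> x y; have := m3 x y (cyc y); rewrite /= !g_1 mul1g mulg1.
split; first exact: fcomm.
split=> //; split; first by move=> x y [-> _].
do 7 (split; first by move=> *; rewrite ?g_1 ?mul1g ?mulg1).
by move=> x y z; rewrite !g_1 mul1g mulg1 /= -fcyc.
Qed.

End FlipCycleCocycle.

Theorem mainTheorem4 :
  (forall (n : nat) (H : groupType) (f g : 'I_n -> 'I_n -> H),
    nc_cocycle_pair (@flip n) (@beta_cyc n) f g <->
    ((forall x y, g x y = 1) /\
     (forall x y, f x y = f (cyc x) (cyc y)) /\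
     (forall x, f x x = 1) /\
     (forall x y z,
        f x y * f (triv_qdl x y) z =
        f x z * f (triv_qdl x z) (triv_qdl y z)))) /\
  (* n = 2: f is determined by f(1,2) (here f(0,1), 0-indexed) *)
  (forall (H : groupType) (f g f' g' : 'I_2 -> 'I_2 -> H),
    nc_cocycle_pair (@flip 2) (@beta_cyc 2) f g ->
    nc_cocycle_pair (@flip 2) (@beta_cyc 2) f' g' ->
    f ord0 ord_max = f' ord0 ord_max -> f = f').
Proof.
split=> [|H f g f' g']; first exact: nc_cocycle_pair_flip_beta_cycP.
move=> /nc_cocycle_pair_flip_beta_cycP [_ [fcyc [fdiag _]]].
move=> /nc_cocycle_pair_flip_beta_cycP [_ [f'cyc [f'diag _]]] eq01.
apply: (@cyc_invariant_eq_row 2 H f f' ord0 fcyc f'cyc) => y.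
have [-> | ->] : y = ord0 \/ y = ord_max.
  by case: y => [[|[|//]] y_lt]; [left | right]; apply: val_inj.
- by rewrite fdiag f'diag.
- exact: eq01.
Qed.
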